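(* Let $\mathbf D_0\in\mathcal D$ and let $k,t$ satisfy $k\mu(t)<1/2$. Consider the signal model below with the additional assumptions $\sigma=0$ (no noise) and $\Pr(|[\boldsymbol\alpha_0]_j|>\overline\alpha\mid j\in J)=0$ for some $\overline\alpha\ge\underline\alpha>0$. Let $\mathbf x=\mathbf D_0\boldsymbol\alpha_0$ be generated according to this model, with support $J$, and let $\lambda$ satisfy $\frac{\sqrt k\,\overline\alpha}{2-Q_t^2}t<\lambda\le\frac49\underline\alpha$, and $0\le t'\le t$. Then almost surely, uniformly for all $(\mathbf W,\mathbf v)\in\mathcal W_{\mathbf D_0}\times\mathcal S^p$, writing $\mathbf D(t')=\mathbf D(\mathbf W,\mathbf v,t')$: the vector $\hat{\boldsymbol\alpha}(t')$ with $\hat{\boldsymbol\alpha}(t')_J=\big([\mathbf D(t')]_J^\top[\mathbf D(t')]_J\big)^{-1}\big([\mathbf D(t')]_J^\top\mathbf x-\lambda\,\mathrm{sign}([\boldsymbol\alpha_0]_J)\big)$ and $\hat{\boldsymbol\alpha}(t')_{J^c}=\mathbf 0$ is the unique solution of $\min_{\boldsymbol\alpha\in\mathbb R^p}\frac12\|\mathbf x-\mathbf D(t')\boldsymbol\alpha\|_2^2+\lambda\|\boldsymbol\alpha\|_1$, and $\mathrm{sign}(\hat{\boldsymbol\alpha}(t'))=\mathrm{sign}(\boldsymbol\alpha_0)$.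
   Context: $\mathcal D$: real $m\times p$ matrices with unit $\ell_2$-norm columns; $\mu_0=\max_{i\ne j}|[\mathbf d_0^i]^\top\mathbf d_0^j|$, $\mu(t)=\mu_0+3t$, $Q_t=1/\sqrt{1-k\mu(t)}$. $\mathcal S^p$ unit sphere; $\mathcal W_{\mathbf D_0}=\{\mathbf W:\mathrm{diag}(\mathbf W^\top\mathbf D_0)=\mathbf 0,\mathrm{diag}(\mathbf W^\top\mathbf W)=\mathbf 1\}$; $\mathbf D(\mathbf W,\mathbf v,t)=\mathbf D_0\mathrm{Diag}[\cos(\mathbf vt)]+\mathbf W\mathrm{Diag}[\sin(\mathbf vt)]$. Signal model: random support $J$ with $|J|=k$; $[\boldsymbol\alpha_0]_j=0$ off $J$ and, on $J$, i.i.d. copies of $\alpha$ with $\mathbb Ee^{s\alpha}\le e^{c^2s^2/2}$ for all $s$ ($\sigma_\alpha$ smallest such $c$) and $\Pr(|\alpha|<\underline\alpha)=0$; support and coefficients independent. *)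

From HB Require Import structures.
From mathcomp Require Import all_boot all_order all_algebra.
From mathcomp Require Import all_classical all_reals all_analysis.
Set Implicit Arguments. Unset Strict Implicit. Unset Printing Implicit Defensive.
Import Order.TTheory GRing.Theory Num.Theory.
Local Open Scope classical_set_scope.
Local Open Scope ring_scope.

Section Defs.
Variable R : realType.

Definition coherence (m p : nat) (D0 : 'M[R]_(m, p)) : R :=
  \big[Num.max/0]_(i < p) \big[Num.max/0]_(j < p | i != j) `|(D0^T *m D0) i j|.

Definition mu_t (m p : nat) (D0 : 'M[R]_(m, p)) (t : R) : R := coherence D0 + 3 * t.

Definition Q_t (m p : nat) (k : nat) (D0 : 'M[R]_(m, p)) (t : R) : R :=
  (Num.sqrt (1 - k%:R * mu_t D0 t))^-1.

Definition unit_columns (m p : nat) (D : 'M[R]_(m, p)) : Prop :=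
  forall j : 'I_p, \sum_(i < m) D i j ^+ 2 = 1.

Definition W_set (m p : nat) (D0 W : 'M[R]_(m, p)) : Prop :=
  (forall j : 'I_p, (W^T *m D0) j j = 0) /\ (forall j : 'I_p, (W^T *m W) j j = 1).

Definition unit_sphere (p : nat) (v : 'cV[R]_p) : Prop :=
  \sum_(j < p) v j 0 ^+ 2 = 1.

Definition Dpath (m p : nat) (D0 W : 'M[R]_(m, p)) (v : 'cV[R]_p) (t : R)
  : 'M[R]_(m, p) :=
  D0 *m diag_mx (\row_j cos (v j 0 * t)) + W *m diag_mx (\row_j sin (v j 0 * t)).

(* selection matrix of a support J: columns e_j, j in J (increasing order) *)
Definition selJ (p : nat) (J : {set 'I_p}) : 'M[R]_(p, #|J|) :=
  \matrix_(j < p, i < #|J|) (j == enum_val i)%:R.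

Definition sqnorm2 (n : nat) (y : 'cV[R]_n) : R := \sum_(i < n) y i 0 ^+ 2.
Definition norm1 (n : nat) (y : 'cV[R]_n) : R := \sum_(i < n) `|y i 0|.

Definition lasso (m p : nat) (x : 'cV[R]_m) (D : 'M[R]_(m, p)) (lambda : R)
  (a : 'cV[R]_p) : R :=
  2^-1 * sqnorm2 (x - D *m a) + lambda * norm1 a.

Definition sgn_vec (n : nat) (y : 'cV[R]_n) : 'cV[R]_n := map_mx Num.sg y.

Definition alpha_hat (m p : nat) (D : 'M[R]_(m, p)) (x : 'cV[R]_m)
  (J : {set 'I_p}) (alpha0 : 'cV[R]_p) (lambda : R) : 'cV[R]_p :=
  let DJ := D *m selJ J in
  selJ J *m (invmx (DJ^T *m DJ) *m
            (DJ^T *m x - lambda *: sgn_vec ((selJ J)^T *m alpha0))).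

End Defs.

Definition mutually_independent {d} {Omega : measurableType d} {R : realType}
  (P : probability Omega R) (I : finType) (F : I -> set (set Omega)) : Prop :=
  forall E : I -> set Omega, (forall i, F i (E i)) ->
  forall S : {set I},
    fine (P (\big[setI/setT]_(i in S) E i)) = \prod_(i in S) fine (P (E i)).

Definition signal {Omega : Type} {R : realType} (p : nat) (J : Omega -> {set 'I_p})
  (a : 'I_p -> Omega -> R) (w : Omega) : 'cV[R]_p :=
  \col_j (if j \in J w then a j w else 0).

From HB Require Import structures.
From mathcomp Require Import all_boot all_order all_algebra.
From mathcomp Require Import all_classical all_reals all_analysis.
From mathcomp Require Import ring lra.
Import Order.TTheory GRing.Theory Num.Theory.
Import numFieldNormedType.Exports.
Local Open Scope classical_set_scope.
Local Open Scope ring_scope.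

(* For such an outcome the claim is deterministic.
   Along the path, D(t') keeps unit columns, its coherence is at most
   mu_0 + 3t', and x = D(t')_J a0_J + e with |e| <= sqrt k ahi t, because
   each column moves by at most |v_j| t'.  Diagonal dominance of the Gram
   matrix G = D_J^T D_J gives |G^-1 y|_oo <= Q_t^2 |y|_oo, hence
   alpha_hat_J = a0_J + G^-1 D_J^T e - lambda G^-1 sign(a0_J) is within
   alo of a0_J (this is where lambda <= 4/9 alo enters) and has its signs,
   while the residual correlations off J stay strictly below lambda.  This
   strict dual certificate, together with injectivity of D_J, makes alpha_hat
   the unique Lasso minimizer. *)

Set Implicit Arguments. Unset Strict Implicit. Unset Printing Implicit Defensive.

Section EuclideanFacts.
Variable R : realType.
Implicit Types n : nat.

Definition dot n (u v : 'cV[R]_n) : R := \sum_i u i 0 * v i 0.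

(* Cauchy-Schwarz, from Lagrange's identity
   [\sum_i \sum_j (a_i b_j - a_j b_i)^2 = 2 (\sum a^2)(\sum b^2) - 2 (\sum a b)^2]. *)
Lemma sum_mul_sqr_le n (a b : 'I_n -> R) :
  (\sum_i a i * b i) ^+ 2 <= (\sum_i a i ^+ 2) * (\sum_i b i ^+ 2).
Proof.
set T1 := \sum_i \sum_j a i ^+ 2 * b j ^+ 2.
set T2 := \sum_i \sum_j a j ^+ 2 * b i ^+ 2.
set T3 := \sum_i \sum_j a i * b i * (a j * b j).
have lagrange : \sum_i \sum_j (a i * b j - a j * b i) ^+ 2 = T1 + T2 - T3 *+ 2.
  rewrite /T1 /T2 /T3 -sumrMnl -big_split -sumrB /=.
  apply: eq_bigr => i _; rewrite -sumrMnl -big_split -sumrB /=.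
  by apply: eq_bigr => j _; ring.
have -> : (\sum_i a i ^+ 2) * (\sum_i b i ^+ 2) = T1.
  by rewrite big_distrl /=; apply: eq_bigr => i _; rewrite big_distrr.
have -> : (\sum_i a i * b i) ^+ 2 = T3.
  by rewrite expr2 big_distrl /=; apply: eq_bigr => i _; rewrite big_distrr.
have T21 : T2 = T1 by rewrite /T2 exchange_big.
have : 0 <= \sum_i \sum_j (a i * b j - a j * b i) ^+ 2.
  by apply: sumr_ge0 => i _; apply: sumr_ge0 => j _; apply: sqr_ge0.
rewrite lagrange T21; lra.
Qed.

Lemma dotC n (u v : 'cV[R]_n) : dot u v = dot v u.
Proof. by apply: eq_bigr => i _; rewrite mulrC. Qed.

Lemma dotvv_ge0 n (u : 'cV[R]_n) : 0 <= dot u u.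
Proof. by apply: sumr_ge0 => i _; rewrite -expr2 sqr_ge0. Qed.

Lemma sqnorm2E n (u : 'cV[R]_n) : sqnorm2 u = dot u u.
Proof. by apply: eq_bigr => i _; rewrite expr2. Qed.

Lemma dotDl n (u v w : 'cV[R]_n) : dot (u + v) w = dot u w + dot v w.
Proof. by rewrite /dot -big_split; apply: eq_bigr => i _; rewrite mxE mulrDl. Qed.

Lemma dotNl n (u w : 'cV[R]_n) : dot (- u) w = - dot u w.
Proof. by rewrite /dot -sumrN; apply: eq_bigr => i _; rewrite mxE mulNr. Qed.

Lemma dotZl n a (u w : 'cV[R]_n) : dot (a *: u) w = a * dot u w.
Proof. by rewrite /dot big_distrr; apply: eq_bigr => i _; rewrite mxE -mulrA. Qed.

Lemma dotBl n (u v w : 'cV[R]_n) : dot (u - v) w = dot u w - dot v w.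
Proof. by rewrite dotDl dotNl. Qed.

Lemma dotDr n (u v w : 'cV[R]_n) : dot w (u + v) = dot w u + dot w v.
Proof. by rewrite dotC dotDl !(dotC w). Qed.

Lemma dotBr n (u v w : 'cV[R]_n) : dot w (u - v) = dot w u - dot w v.
Proof. by rewrite dotC dotBl !(dotC w). Qed.

Lemma dotZr n a (u w : 'cV[R]_n) : dot w (a *: u) = a * dot w u.
Proof. by rewrite dotC dotZl dotC. Qed.

Lemma dot0r n (u : 'cV[R]_n) : dot u 0 = 0.
Proof. by rewrite /dot big1 // => i _; rewrite mxE mulr0. Qed.

Lemma trmx_mul_dot q n1 n2 (A : 'M[R]_(q, n1)) (B : 'M[R]_(q, n2)) i j :
  (A^T *m B) i j = dot (col i A) (col j B).
Proof. by rewrite mxE; apply: eq_bigr => k _; rewrite !mxE. Qed.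

Lemma trmx_mulmx_dot q n (A : 'M[R]_(q, n)) (u : 'cV[R]_q) j :
  (A^T *m u) j 0 = dot (col j A) u.
Proof. by rewrite mxE; apply: eq_bigr => k _; rewrite !mxE. Qed.

Lemma dot_mulmxl n q (A : 'M[R]_(n, q)) (u : 'cV[R]_q) (w : 'cV[R]_n) :
  dot (A *m u) w = dot u (A^T *m w).
Proof.
rewrite /dot; under [RHS]eq_bigr do rewrite trmx_mulmx_dot /dot big_distrr.
rewrite exchange_big; apply: eq_bigr => i _ /=; rewrite mxE big_distrl.
by apply: eq_bigr => j _; rewrite !mxE mulrCA mulrA.
Qed.

Lemma dotvv_eq0 n (u : 'cV[R]_n) : dot u u = 0 -> u = 0.
Proof.
move=> h; apply/matrixP => i j; rewrite (ord1 j) mxE.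
have /(_ i isT) : forall k, true -> u k 0 * u k 0 = 0.
  by apply: psumr_eq0P h => k _; rewrite -expr2 sqr_ge0.
by move/eqP; rewrite mulf_eq0 orbb => /eqP.
Qed.

Lemma dotBB n (a c : 'cV[R]_n) :
  dot (a - c) (a - c) = dot a a - 2 * dot c a + dot c c.
Proof. rewrite !dotBl !dotBr (dotC a c); ring. Qed.

Lemma dot_orth_le n (a c : 'cV[R]_n) :
  dot a c = 0 -> dot a a <= dot (a + c) (a + c).
Proof.
move=> h; rewrite !dotDl !dotDr h (dotC c a) h addr0 add0r lerDl.
exact: dotvv_ge0.
Qed.

Lemma sqr_le_of_norm_le (a b : R) : `|a| <= `|b| -> a ^+ 2 <= b ^+ 2.
Proof.
by rewrite -(real_normK (num_real a)) -(real_normK (num_real b)) ler_sqr ?nnegrE.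
Qed.

Lemma norm_le_of_sqr_le (a b : R) : 0 <= b -> a ^+ 2 <= b ^+ 2 -> `|a| <= b.
Proof.
by move=> b0; rewrite -(real_normK (num_real a)) ler_sqr ?nnegrE.
Qed.

Lemma dot_sqr_le n (u v : 'cV[R]_n) : dot u v ^+ 2 <= dot u u * dot v v.
Proof.
have := sum_mul_sqr_le (fun i => u i 0) (fun i => v i 0).
by congr (_ <= _ * _); apply: eq_bigr => i _; rewrite expr2.
Qed.

Lemma dot_unit_le n (u v : 'cV[R]_n) (eps : R) :
  dot u u = 1 -> 0 <= eps -> dot v v <= eps ^+ 2 -> `|dot u v| <= eps.
Proof.
move=> hu he hv; apply: norm_le_of_sqr_le => //.
by apply: le_trans (dot_sqr_le u v) _; rewrite hu mul1r.
Qed.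

Lemma dot_mulmx_le q n (F : 'M[R]_(q, n)) (c : 'cV[R]_n) :
  dot (F *m c) (F *m c) <= dot c c * \sum_i \sum_r F r i ^+ 2.
Proof.
rewrite exchange_big /= big_distrr /=.
apply: ler_sum => r _; rewrite mxE -expr2 mulrC.
have := sum_mul_sqr_le (fun i => F r i) (fun i => c i 0).
by congr (_ <= _ * _); apply: eq_bigr => i _; rewrite expr2.
Qed.

Lemma norm_sin_le (x : R) : `|sin x| <= `|x|.
Proof.
wlog x0 : x / 0 < x.
  move=> H; have [xN|xP|->] := ltgtP x 0; last by rewrite sin0 normr0.
    by rewrite -normrN -sinN -(normrN x) H // oppr_gt0.
  exact: H.
have hc : {within `[0, x], continuous (@sin R)}.
  by apply: derivable_within_continuous => z _; exact: ex_derive.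
have [c _ Hc] := @MVT R sin cos 0 x x0 (fun y _ => is_derive_sin y) hc.
rewrite sin0 !subr0 in Hc.
by rewrite Hc normrM ler_piMl // cos_max.
Qed.

Lemma two_sub_cos_le (x : R) : 2 - 2 * cos x <= x ^+ 2.
Proof.
have -> : cos x = 1 - 2 * sin (x / 2) ^+ 2.
  rewrite -{1}[x](mulfVK (x:=2)) ?pnatr_eq0 // mulr_natr cos_mulr2n.
  by rewrite cos2sin2 mulr2n; ring.
have := sqr_le_of_norm_le (norm_sin_le (x / 2)).
have -> : (x / 2) ^+ 2 = x ^+ 2 / 4 by field.
lra.
Qed.

End EuclideanFacts.

Section Selection.
Variables (R : realType) (p : nat) (J : {set 'I_p}).
Local Notation S := (selJ R J).

Lemma mulmx_selJ q (M : 'M[R]_(q, p)) r i : (M *m S) r i = M r (enum_val i).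
Proof.
rewrite !mxE (bigD1 (enum_val i)) //= mxE eqxx mulr1 big1 ?addr0 // => j hj.
by rewrite mxE (negbTE hj) mulr0.
Qed.

Lemma trmx_selJ_mulmx q (M : 'M[R]_(p, q)) i c : (S^T *m M) i c = M (enum_val i) c.
Proof.
rewrite !mxE (bigD1 (enum_val i)) //= !mxE eqxx mul1r big1 ?addr0 // => j hj.
by rewrite !mxE (negbTE hj) mul0r.
Qed.

Lemma selJ_mulmx_enum_val (y : 'cV[R]_#|J|) i : (S *m y) (enum_val i) 0 = y i 0.
Proof.
rewrite !mxE (bigD1 i) //= mxE eqxx mul1r big1 ?addr0 // => i' hi.
rewrite mxE; case: eqP => [/enum_val_inj E|_]; last by rewrite mul0r.
by rewrite E eqxx in hi.
Qed.

Lemma selJ_mulmx_notin (y : 'cV[R]_#|J|) j : j \notin J -> (S *m y) j 0 = 0.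
Proof.
move=> hj; rewrite !mxE big1 // => i _; rewrite mxE.
case: eqP => [E|_]; last by rewrite mul0r.
by move: hj; rewrite E enum_valP.
Qed.

Lemma selJ_trmx_supported (v : 'cV[R]_p) : (forall j, j \notin J -> v j 0 = 0) ->
  S *m (S^T *m v) = v.
Proof.
move=> hv; apply/matrixP => j c; rewrite (ord1 c).
have [hj|hj] := boolP (j \in J); last by rewrite selJ_mulmx_notin // hv.
by rewrite -(enum_rankK_in hj hj) selJ_mulmx_enum_val trmx_selJ_mulmx.
Qed.

Lemma sum_enum_val_le (f : 'I_p -> R) : (forall j, 0 <= f j) ->
  \sum_(i < #|J|) f (enum_val i) <= \sum_j f j.
Proof.
move=> f0; rewrite -big_enum_val big_mkcond /=.
by apply: ler_sum => j _; case: ifP.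
Qed.

End Selection.

Lemma sgn_vecE (R : realType) n (v : 'cV[R]_n) j : sgn_vec v j 0 = Num.sg (v j 0).
Proof. by rewrite mxE. Qed.

Lemma sgr_add_small (R : realFieldType) (a d : R) :
  `|d| < `|a| -> Num.sg (a + d) = Num.sg a.
Proof.
have hd1 : d <= `|d| := ler_norm d.
have hd2 : - d <= `|d| by rewrite -normrN ler_norm.
have [a0|a0|->] := ltgtP a 0; last by rewrite normr0 ltNge normr_ge0.
  by rewrite (ltr0_norm a0) => h; rewrite (ltr0_sg a0) ltr0_sg //; lra.
by rewrite (gtr0_norm a0) => h; rewrite (gtr0_sg a0) gtr0_sg //; lra.
Qed.

Section LassoOptimality.
Variables (R : realType) (m p : nat) (x : 'cV[R]_m) (D : 'M[R]_(m, p)) (lam : R).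

Definition l1_excess (a b z : R) : R := lam * `|b| - lam * `|a| - (b - a) * z.

Lemma l1_excess_sg_ge0 (a b : R) : 0 <= lam -> 0 <= l1_excess a b (lam * Num.sg a).
Proof.
move=> l0; rewrite /l1_excess.
have -> : lam * `|b| - lam * `|a| - (b - a) * (lam * Num.sg a)
   = lam * (`|b| - Num.sg a * b) + lam * (Num.sg a * a - `|a|) by ring.
rewrite -normrEsg subrr mulr0 addr0; apply: mulr_ge0 => //.
rewrite subr_ge0; apply: le_trans (ler_norm _) _.
by rewrite normrM ler_piMl // normr_sg; case: (_ != 0).
Qed.

Lemma l1_excess0_ge (a b z : R) : a = 0 -> `|b| * (lam - `|z|) <= l1_excess a b z.
Proof.
move=> ->; rewrite /l1_excess normr0 mulr0 !subr0.
have : b * z <= `|b| * `|z| by rewrite -normrM ler_norm.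
lra.
Qed.

Lemma lasso_expand (ah b : 'cV[R]_p) :
  lasso x D lam b = lasso x D lam ah +
   (2^-1 * dot (D *m (b - ah)) (D *m (b - ah)) +
    \sum_j l1_excess (ah j 0) (b j 0) ((D^T *m (x - D *m ah)) j 0)).
Proof.
rewrite /lasso; set r := x - D *m ah; set h := b - ah.
have -> : x - D *m b = r - D *m h by rewrite /r /h mulmxBr opprB addrA subrK.
rewrite !sqnorm2E dotBB dot_mulmxl.
have -> : \sum_j l1_excess (ah j 0) (b j 0) ((D^T *m r) j 0)
   = lam * norm1 b - lam * norm1 ah - dot h (D^T *m r).
  rewrite /norm1 /dot !big_distrr -!sumrB; apply: eq_bigr => j _.
  by rewrite /l1_excess /h !mxE.
by field.
Qed.

(* Fuchs' strict dual certificate condition. *)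
Lemma lasso_certificate (J : {set 'I_p}) (ah : 'cV[R]_p) :
  0 < lam ->
  (forall j, j \in J -> (D^T *m (x - D *m ah)) j 0 = lam * Num.sg (ah j 0)) ->
  (forall j, j \notin J -> ah j 0 = 0 /\ `|(D^T *m (x - D *m ah)) j 0| < lam) ->
  (forall h : 'cV[R]_p, (forall j, j \notin J -> h j 0 = 0) -> D *m h = 0 -> h = 0) ->
  (forall b, lasso x D lam ah <= lasso x D lam b) /\
  (forall b, lasso x D lam b <= lasso x D lam ah -> b = ah).
Proof.
move=> l0 hin hout hinj; set z := D^T *m (x - D *m ah).
have excess_ge0 (b : 'cV[R]_p) j : 0 <= l1_excess (ah j 0) (b j 0) (z j 0).
  have [hj|hj] := boolP (j \in J); first by rewrite hin //; apply: l1_excess_sg_ge0; exact: ltW.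
  have [ah0 hz] := hout j hj; apply: le_trans (l1_excess0_ge _ _ ah0).
  by rewrite mulr_ge0 // subr_ge0 ltW.
have quad_ge0 (u : 'cV[R]_m) : 0 <= 2^-1 * dot u u by rewrite mulr_ge0 ?dotvv_ge0.
have gap_ge0 (b : 'cV[R]_p) : 0 <= 2^-1 * dot (D *m (b - ah)) (D *m (b - ah)) +
    \sum_j l1_excess (ah j 0) (b j 0) (z j 0).
  by rewrite addr_ge0 // sumr_ge0.
split=> b; rewrite (lasso_expand ah b) -/z ?lerDl // gerDl => hle.
have /eqP := le_anti (introT andP (conj hle (gap_ge0 b))).
rewrite paddr_eq0 ?sumr_ge0 // => /andP[/eqP hquad /eqP hsum].
have hDh : D *m (b - ah) = 0.
  by apply: dotvv_eq0; move: hquad => /eqP; rewrite mulf_eq0 invr_eq0 pnatr_eq0 => /eqP.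
apply/eqP; rewrite -subr_eq0; apply/eqP/hinj => // j hj.
have [ah0 hz] := hout j hj.
have heq : l1_excess (ah j 0) (b j 0) (z j 0) = 0.
  exact: (psumr_eq0P (fun k _ => excess_ge0 b k) hsum).
have : `|b j 0| * (lam - `|z j 0|) <= 0 by rewrite -heq l1_excess0_ge.
rewrite pmulr_lle0 ?subr_gt0 // normr_le0 => /eqP bj0.
by rewrite !mxE bj0 ah0 subrr.
Qed.

End LassoOptimality.

Section DiagonalDominance.
Variables (R : realType) (n : nat) (G : 'M[R]_n) (mu : R).
Hypothesis G_diag : forall i, G i i = 1.
Hypothesis G_offdiag : forall i j, i != j -> `|G i j| <= mu.
Hypothesis mu_ge0 : 0 <= mu.
Hypothesis nmu_lt1 : n%:R * mu < 1.

(* Look at the largest entry [u i0]: the off-diagonal terms of row [i0] of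
   [G *m u] contribute at most [n mu |u i0|]. *)
Lemma diag_dominant_norm_le (u : 'cV[R]_n) (M : R) :
  (forall i, `|(G *m u) i 0| <= M) -> forall i, `|u i 0| <= M / (1 - n%:R * mu).
Proof.
move=> hM i; have [i0 _ Hmax] := @arg_maxP _ R _ i predT (fun k => `|u k 0|) isT.
have nmu_ge0 : 0 <= n%:R * mu by rewrite mulr_ge0.
have row_i0 : (G *m u) i0 0 = u i0 0 + \sum_(j | j != i0) G i0 j * u j 0.
  by rewrite mxE (bigD1 i0) //= G_diag mul1r.
have offdiag_le : `|\sum_(j | j != i0) G i0 j * u j 0| <= n%:R * mu * `|u i0 0|.
  apply: le_trans (ler_norm_sum _ _ _) _.
  apply: (@le_trans _ _ (\sum_(j | j != i0) mu * `|u i0 0|)).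
    apply: ler_sum => j hj; rewrite normrM ler_pM //.
    - by apply: G_offdiag; rewrite eq_sym.
    - exact: Hmax.
  apply: (@le_trans _ _ (\sum_j mu * `|u i0 0|)).
    by rewrite [X in _ <= X](bigD1 i0) //= lerDr mulr_ge0.
  rewrite sumr_const (_ : #|_| = n); last exact: card_ord.
  by rewrite -[X in X <= _]mulr_natl mulrA.
have key : `|u i0 0| * (1 - n%:R * mu) <= M.
  have := lerB_normD (u i0 0) (\sum_(j | j != i0) G i0 j * u j 0).
  rewrite -row_i0 mulrBr mulr1 [_ * (_ * mu)]mulrC => h.
  have := hM i0; lra.
apply: le_trans (Hmax i isT) _.
by rewrite ler_pdivlMr ?subr_gt0.
Qed.

Lemma diag_dominant_unitmx : G \in unitmx.
Proof.
rewrite unitmxE unitfE -det_tr; apply/negP => /det0P [v /negP v_neq0 vG0].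
apply: v_neq0; apply/eqP/matrixP => i j; rewrite (ord1 i) mxE.
have Gvt0 : G *m v^T = 0 by rewrite -[G *m _]trmxK trmx_mul trmxK vG0 trmx0.
have hv k : `|(G *m v^T) k 0| <= 0 by rewrite Gvt0 mxE normr0.
apply/eqP; rewrite -normr_le0.
by have := diag_dominant_norm_le hv j; rewrite mul0r mxE.
Qed.

End DiagonalDominance.

Lemma inv_one_sub_bounds (R : realFieldType) (z : R) : 0 <= z -> z < 2^-1 ->
  [/\ 0 < (1 - z)^-1, (1 - z)^-1 < 2 & z * (1 - z)^-1 = (1 - z)^-1 - 1].
Proof.
move=> z0 zhalf; have pos : 0 < 1 - z by lra.
have Q0 : 0 < (1 - z)^-1 by rewrite invr_gt0.
have zQ : z * (1 - z)^-1 = (1 - z)^-1 - 1 by field; rewrite gt_eqF.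
split=> //; have : z * (1 - z)^-1 < 2^-1 * (1 - z)^-1 by rewrite ltr_pM2r.
lra.
Qed.

(* [eps Q + lam Q <= lam ((2 - Q) Q + Q) <= 9/4 lam], the last step being
   [(Q - 3/2)^2 >= 0]. *)
Lemma recovery_margin (R : realFieldType) (eps lam Q alo : R) :
  0 < Q -> 0 < lam -> eps < lam * (2 - Q) -> lam <= 4 / 9 * alo ->
  eps * Q + lam * Q < alo.
Proof.
move=> Q0 l0 heps hlam.
have h1 : eps * Q < lam * (2 - Q) * Q by rewrite ltr_pM2r.
have h2 : 0 <= lam * (Q - 3 / 2) ^+ 2 by rewrite mulr_ge0 ?sqr_ge0 ?ltW.
have E : lam * (Q - 3 / 2) ^+ 2 = 9 / 4 * lam - (lam * (2 - Q) * Q + lam * Q) by field.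
rewrite E in h2; lra.
Qed.

Section ExactRecovery.
Variables (R : realType) (m p : nat) (D : 'M[R]_(m, p)) (J : {set 'I_p}).
Variables (x : 'cV[R]_m) (al0 : 'cV[R]_p) (lam mu eps alo : R).
Local Notation n := #|J|.
Local Notation S := (selJ R J).
Local Notation DJ := (D *m S).
Local Notation G := (DJ^T *m DJ).
(* [Q] is the paper's [Q_t ^ 2]. *)
Local Notation Q := (1 - n%:R * mu)^-1.

Hypothesis D_diag : forall j, (D^T *m D) j j = 1.
Hypothesis D_coh : forall i j, i \in J -> i != j -> `|(D^T *m D) i j| <= mu.
Hypothesis mu_ge0 : 0 <= mu.
Hypothesis nmu_lt : n%:R * mu < 2^-1.

Let nmu_lt1 : n%:R * mu < 1.
Proof. by apply: lt_trans nmu_lt _; rewrite invf_lt1 ?ltr1n. Qed.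

Lemma gramJ_E i i' : G i i' = (D^T *m D) (enum_val i) (enum_val i').
Proof. by rewrite trmx_mul mulmxA mulmx_selJ -mulmxA trmx_selJ_mulmx. Qed.

Lemma gramJ_offdiag i i' : i != i' -> `|G i i'| <= mu.
Proof.
move=> neq; rewrite gramJ_E D_coh ?enum_valP //.
by apply: contra neq => /eqP/enum_val_inj ->.
Qed.

Lemma gramJ_norm_le (u : 'cV[R]_n) (M : R) :
  (forall i, `|(G *m u) i 0| <= M) -> forall i, `|u i 0| <= M * Q.
Proof.
apply: diag_dominant_norm_le => //; first by move=> i; rewrite gramJ_E D_diag.
exact: gramJ_offdiag.
Qed.

Lemma gramJ_unitmx : G \in unitmx.
Proof.
apply: (diag_dominant_unitmx (mu := mu)) => //; first by move=> i; rewrite gramJ_E D_diag.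
exact: gramJ_offdiag.
Qed.

Lemma Q_bounds : [/\ 0 < Q, Q < 2 & n%:R * mu * Q = Q - 1].
Proof. by apply: inv_one_sub_bounds; rewrite ?mulr_ge0. Qed.

Lemma DJ_supported_inj (h : 'cV[R]_p) :
  (forall j, j \notin J -> h j 0 = 0) -> D *m h = 0 -> h = 0.
Proof.
move=> hsupp Dh0; rewrite -(selJ_trmx_supported hsupp).
have : G *m (S^T *m h) = 0 by rewrite -mulmxA -(mulmxA D) selJ_trmx_supported // Dh0 mulmx0.
by move/(congr1 (mulmx (invmx G))); rewrite mulKmx ?gramJ_unitmx // mulmx0 => ->; rewrite mulmx0.
Qed.

Hypothesis al0_supp : forall j, j \notin J -> al0 j 0 = 0.
Hypothesis eps_ge0 : 0 <= eps.
Local Notation a0J := (S^T *m al0).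
Local Notation e := (x - DJ *m a0J).
Hypothesis noise_le : dot e e <= eps ^+ 2.
Hypothesis eps_lt : eps < lam * (2 - Q).
Hypothesis al0_ge : forall j, j \in J -> alo <= `|al0 j 0|.
Hypothesis lam_le : lam <= 4 / 9 * alo.

Local Notation s := (sgn_vec a0J).
Local Notation ah := (alpha_hat D x J al0 lam).
Local Notation y := (invmx G *m (DJ^T *m x - lam *: s)).
(* [w] fits the noise and [g] is the shrinkage direction, see [y_E]. *)
Local Notation w := (invmx G *m (DJ^T *m e)).
Local Notation g := (invmx G *m s).

Lemma lam_gt0 : 0 < lam.
Proof.
have [_ Q2 _] := Q_bounds.
by rewrite -(pmulr_lgt0 _ (_ : 0 < 2 - Q)) ?subr_gt0 //; apply: le_lt_trans eps_lt.
Qed.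

Lemma y_E : y = a0J + (w - lam *: g).
Proof.
have -> : DJ^T *m x - lam *: s = G *m a0J + (DJ^T *m e - lam *: s).
  have hx : x = DJ *m a0J + e by rewrite addrC subrK.
  by rewrite {1}hx mulmxDr mulmxA addrA.
by rewrite mulmxDr mulKmx ?gramJ_unitmx // mulmxBr -scalemxAr.
Qed.

Lemma col_dot1 j : dot (col j D) (col j D) = 1.
Proof. by rewrite -trmx_mul_dot D_diag. Qed.

Lemma w_le i : `|w i 0| <= eps * Q.
Proof.
apply: gramJ_norm_le => k; rewrite mulKVmx ?gramJ_unitmx //.
rewrite trmx_mul -(mulmxA _ D^T) trmx_selJ_mulmx trmx_mulmx_dot.
exact: dot_unit_le (col_dot1 _) eps_ge0 noise_le.
Qed.

Lemma g_le i : `|g i 0| <= Q.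
Proof.
rewrite -[Q]mul1r; apply: gramJ_norm_le => k; rewrite mulKVmx ?gramJ_unitmx //.
by rewrite sgn_vecE normr_sg; case: (_ != 0).
Qed.

Lemma y_sg i : Num.sg (y i 0) = Num.sg (a0J i 0).
Proof.
have [Q0 _ _] := Q_bounds.
rewrite y_E mxE; apply: sgr_add_small.
rewrite trmx_selJ_mulmx; apply: lt_le_trans (al0_ge (enum_valP i)).
apply: le_lt_trans (recovery_margin Q0 lam_gt0 eps_lt lam_le).
have -> : (w - lam *: g) i 0 = w i 0 - lam * g i 0 by rewrite !mxE.
apply: le_trans (ler_normB _ _) _; rewrite lerD ?w_le //.
by rewrite normrM gtr0_norm ?lam_gt0 // ler_wpM2l ?g_le // ltW ?lam_gt0.
Qed.

Lemma sgn_alpha_hat : sgn_vec ah = sgn_vec al0.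
Proof.
apply/matrixP => j c; rewrite (ord1 c) !sgn_vecE.
have [hj|hj] := boolP (j \in J); last by rewrite selJ_mulmx_notin // al0_supp // sgr0.
by rewrite -(enum_rankK_in hj hj) selJ_mulmx_enum_val y_sg trmx_selJ_mulmx.
Qed.

Local Notation u := (e - DJ *m w).

Lemma residual_E : x - D *m ah = u + lam *: (DJ *m g).
Proof.
rewrite /alpha_hat /= mulmxA y_E mulmxDr mulmxBr -scalemxAr.
by rewrite opprD opprB !addrA addrAC.
Qed.

Lemma DJ_trmx_u : DJ^T *m u = 0.
Proof. by rewrite mulmxBr (mulmxA DJ^T DJ) mulKVmx ?gramJ_unitmx // subrr. Qed.

Lemma u_dot_le : dot u u <= eps ^+ 2.
Proof.
apply: le_trans noise_le; rewrite -[in X in _ <= X](subrK (DJ *m w) e).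
by apply: dot_orth_le; rewrite dotC dot_mulmxl DJ_trmx_u dot0r.
Qed.

Lemma correlation_in i : (D^T *m (x - D *m ah)) (enum_val i) 0 = lam * s i 0.
Proof.
rewrite -trmx_selJ_mulmx mulmxA -trmx_mul residual_E mulmxDr DJ_trmx_u add0r.
by rewrite -scalemxAr (mulmxA DJ^T DJ) mulKVmx ?gramJ_unitmx // mxE.
Qed.

Lemma correlation_out j : j \notin J -> `|(D^T *m (x - D *m ah)) j 0| < lam.
Proof.
move=> hj; have [_ _ nmuQ] := Q_bounds.
have u_le : `|(D^T *m u) j 0| <= eps.
  by rewrite trmx_mulmx_dot; apply: dot_unit_le => //; [exact: col_dot1|exact: u_dot_le].
have Dg_le : `|(D^T *m (DJ *m g)) j 0| <= Q - 1.
  rewrite mulmxA mulmxA mxE -nmuQ; apply: le_trans (ler_norm_sum _ _ _) _.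
  apply: (@le_trans _ _ (\sum_(i < n) mu * Q)); last first.
    rewrite sumr_const (_ : #|_| = n); last exact: card_ord.
    by rewrite -[X in X <= _]mulr_natl mulrA.
  apply: ler_sum => i _; rewrite mulmx_selJ normrM ler_pM ?g_le //.
  rewrite trmx_mul_dot dotC -trmx_mul_dot D_coh ?enum_valP //.
  by apply: contraNneq hj => <-; exact: enum_valP.
rewrite residual_E mulmxDr -scalemxAr.
have -> : (D^T *m u + lam *: (D^T *m (DJ *m g))) j 0
    = (D^T *m u) j 0 + lam * (D^T *m (DJ *m g)) j 0 by rewrite !mxE.
apply: le_lt_trans (ler_normD _ _) _; rewrite normrM gtr0_norm ?lam_gt0 //.
have : lam * `|(D^T *m (DJ *m g)) j 0| <= lam * (Q - 1).
  by rewrite ler_wpM2l // ltW ?lam_gt0.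
by move: eps_lt u_le; lra.
Qed.

Theorem exact_recovery :
  [/\ forall b, lasso x D lam ah <= lasso x D lam b,
      forall b, lasso x D lam b <= lasso x D lam ah -> b = ah
    & sgn_vec ah = sgn_vec al0].
Proof.
have ah_in j : j \in J -> (D^T *m (x - D *m ah)) j 0 = lam * Num.sg (ah j 0).
  move=> hj; rewrite -(enum_rankK_in hj hj) correlation_in.
  by rewrite /alpha_hat /= selJ_mulmx_enum_val y_sg sgn_vecE.
have ah_out j : j \notin J -> ah j 0 = 0 /\ `|(D^T *m (x - D *m ah)) j 0| < lam.
  by move=> hj; split; [rewrite /alpha_hat /= selJ_mulmx_notin | exact: correlation_out].
have [hmin huniq] := lasso_certificate lam_gt0 ah_in ah_out DJ_supported_inj.
by split; [exact: hmin | exact: huniq | exact: sgn_alpha_hat].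
Qed.

End ExactRecovery.

Section DictionaryPath.
Variables (R : realType) (m p : nat) (D0 W : 'M[R]_(m, p)) (v : 'cV[R]_p).

Lemma Dpath_col t j :
  col j (Dpath D0 W v t) = cos (v j 0 * t) *: col j D0 + sin (v j 0 * t) *: col j W.
Proof.
apply/matrixP => r c; rewrite /Dpath !mul_mx_diag !mxE.
by rewrite [cos _ * _]mulrC [sin _ * _]mulrC.
Qed.

Lemma gram_Dpath t i j :
  ((Dpath D0 W v t)^T *m Dpath D0 W v t) i j =
  cos (v i 0 * t) * cos (v j 0 * t) * dot (col i D0) (col j D0)
  + cos (v i 0 * t) * sin (v j 0 * t) * dot (col i D0) (col j W)
  + sin (v i 0 * t) * cos (v j 0 * t) * dot (col i W) (col j D0)
  + sin (v i 0 * t) * sin (v j 0 * t) * dot (col i W) (col j W).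
Proof. rewrite trmx_mul_dot !Dpath_col !dotDl !dotDr !dotZl !dotZr; ring. Qed.

Hypothesis D0_unit : unit_columns D0.
Hypothesis W_in : W_set D0 W.
Hypothesis v_unit : unit_sphere v.

Lemma D0_col_dot1 j : dot (col j D0) (col j D0) = 1.
Proof. by rewrite -(D0_unit j); apply: eq_bigr => i _; rewrite !mxE expr2. Qed.

Lemma W_col_dot1 j : dot (col j W) (col j W) = 1.
Proof. by rewrite -trmx_mul_dot W_in.2. Qed.

Lemma W_D0_col_dot0 j : dot (col j W) (col j D0) = 0.
Proof. by rewrite -trmx_mul_dot W_in.1. Qed.

Lemma unit_sphere_norm_le1 j : `|v j 0| <= 1.
Proof.
apply: norm_le_of_sqr_le => //; rewrite expr1n -v_unit.
by rewrite (bigD1 j) //= lerDl sumr_ge0 // => k _; rewrite sqr_ge0.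
Qed.

Lemma norm_sin_path_le t j : 0 <= t -> `|sin (v j 0 * t)| <= t.
Proof.
move=> t0; apply: le_trans (norm_sin_le _) _.
by rewrite normrM (ger0_norm t0) ler_piMl // unit_sphere_norm_le1.
Qed.

Lemma Dpath_gram_diag t j : ((Dpath D0 W v t)^T *m Dpath D0 W v t) j j = 1.
Proof.
rewrite gram_Dpath D0_col_dot1 W_col_dot1 (dotC (col j D0)) W_D0_col_dot0.
by rewrite !mulr0 !addr0 !mulr1 -!expr2 cos2Dsin2.
Qed.

(* Each of the three cross terms of [gram_Dpath] carries a factor [sin] of
   size at most [t]. *)
Lemma Dpath_gram_offdiag t i j : 0 <= t <= 1 -> i != j ->
  `|((Dpath D0 W v t)^T *m Dpath D0 W v t) i j| <= coherence D0 + 3 * t.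
Proof.
move=> /andP[t0 t1] neq_ij; rewrite gram_Dpath.
have unit_le (a b : 'cV[R]_m) : dot a a = 1 -> dot b b = 1 -> `|dot a b| <= 1.
  by move=> ha hb; apply: dot_unit_le ha ler01 _; rewrite hb expr1n.
have term_le (c1 c2 d : R) (e1 e2 : R) : `|c1| <= e1 -> `|c2| <= e2 -> `|d| <= 1 ->
    0 <= e1 -> 0 <= e2 -> `|c1 * c2 * d| <= e1 * e2.
  move=> h1 h2 hd e10 e20; rewrite !normrM -[X in _ <= X]mulr1.
  by rewrite !ler_pM ?mulr_ge0.
have coh : `|dot (col i D0) (col j D0)| <= coherence D0.
  rewrite -trmx_mul_dot /coherence.
  apply: le_trans (le_bigmax _ (fun i => \big[Num.max/0]_(j | i != j) _) i).
  exact: (le_bigmax_cond _ (P := fun j => i != j) (fun j => `|(D0^T *m D0) i j|) neq_ij).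
have e1 : `|cos (v i 0 * t) * cos (v j 0 * t) * dot (col i D0) (col j D0)|
    <= coherence D0.
  rewrite !normrM -[X in _ <= X]mul1r ler_pM ?mulr_ge0 //.
  by rewrite -[1](mulr1 1) ler_pM // cos_max.
have e2 : `|cos (v i 0 * t) * sin (v j 0 * t) * dot (col i D0) (col j W)| <= 1 * t.
  by rewrite term_le ?cos_max ?norm_sin_path_le ?unit_le ?D0_col_dot1 ?W_col_dot1.
have e3 : `|sin (v i 0 * t) * cos (v j 0 * t) * dot (col i W) (col j D0)| <= t * 1.
  by rewrite term_le ?cos_max ?norm_sin_path_le ?unit_le ?D0_col_dot1 ?W_col_dot1.
have e4 : `|sin (v i 0 * t) * sin (v j 0 * t) * dot (col i W) (col j W)| <= t * t.
  by rewrite term_le ?norm_sin_path_le ?unit_le ?W_col_dot1.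
have tt_le : t * t <= t by rewrite ler_piMr.
have norm4D (a b c d : R) : `|a + b + c + d| <= `|a| + `|b| + `|c| + `|d|.
  by do 2 (apply: le_trans (ler_normD _ _) _; rewrite lerD2r); exact: ler_normD.
apply: le_trans (norm4D _ _ _ _) _; lra.
Qed.

Lemma col_Dpath_dist_le t j :
  dot (col j D0 - col j (Dpath D0 W v t)) (col j D0 - col j (Dpath D0 W v t))
  <= (v j 0 * t) ^+ 2.
Proof.
apply: le_trans (two_sub_cos_le (v j 0 * t)); rewrite Dpath_col dotBB.
rewrite !dotDl !dotDr !dotZl !dotZr (dotC (col j D0) (col j W)).
rewrite D0_col_dot1 W_D0_col_dot0 W_col_dot1.
have := cos2Dsin2 (v j 0 * t); set c := cos _; set s := sin _; lra.
Qed.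

Lemma Dpath_residual_le (J : {set 'I_p}) (al0 : 'cV[R]_p) (ahi t : R) :
  (forall j, j \notin J -> al0 j 0 = 0) -> (forall j, j \in J -> `|al0 j 0| <= ahi) ->
  dot (D0 *m al0 - Dpath D0 W v t *m selJ R J *m ((selJ R J)^T *m al0))
      (D0 *m al0 - Dpath D0 W v t *m selJ R J *m ((selJ R J)^T *m al0))
  <= #|J|%:R * ahi ^+ 2 * t ^+ 2.
Proof.
move=> supp al0_le; set S := selJ R J.
have -> : D0 *m al0 - Dpath D0 W v t *m S *m (S^T *m al0)
    = (D0 - Dpath D0 W v t) *m S *m (S^T *m al0).
  by rewrite -{1}(selJ_trmx_supported supp) !mulmxA !mulmxBl.
apply: le_trans (dot_mulmx_le _ _) _; apply: ler_pM; rewrite ?dotvv_ge0 //.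
- by rewrite sumr_ge0 // => i _; rewrite sumr_ge0 // => r _; rewrite sqr_ge0.
- apply: (@le_trans _ _ (\sum_(i < #|J|) ahi ^+ 2)).
    apply: ler_sum => i _; rewrite -expr2 trmx_selJ_mulmx sqr_le_of_norm_le //.
    exact: le_trans (al0_le _ (enum_valP i)) (ler_norm _).
  rewrite sumr_const (_ : #|_| = #|J|); last exact: card_ord.
  by rewrite mulr_natl.
apply: (@le_trans _ _ (\sum_(i < #|J|) (v (enum_val i) 0 * t) ^+ 2)).
  apply: ler_sum => i _; apply: le_trans (col_Dpath_dist_le t (enum_val i)).
  by rewrite le_eqVlt; apply/orP; left; apply/eqP; apply: eq_bigr => r _;
    rewrite mulmx_selJ !mxE expr2.
apply: le_trans (@sum_enum_val_le _ _ J (fun j => (v j 0 * t) ^+ 2) _) _.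
  by move=> j; exact: sqr_ge0.
under eq_bigr do rewrite exprMn.
by rewrite -big_distrl /= v_unit mul1r.
Qed.

End DictionaryPath.

Lemma Q_t_sqr (R : realType) m p k (D0 : 'M[R]_(m, p)) t :
  k%:R * mu_t D0 t < 1 -> Q_t k D0 t ^+ 2 = (1 - k%:R * mu_t D0 t)^-1.
Proof. by move=> h; rewrite /Q_t exprVn sqr_sqrtr // subr_ge0 ltW. Qed.

Lemma coherence_ge0 (R : realType) m p (D0 : 'M[R]_(m, p)) : 0 <= coherence D0.
Proof. exact: bigmax_ge_id. Qed.

Lemma mu_t_small_le1 (R : realType) m p k (D0 : 'M[R]_(m, p)) t :
  (0 < k)%N -> 0 <= t -> k%:R * mu_t D0 t < 2^-1 -> t <= 1.
Proof.
move=> k_gt0 t0 hkt; have mu_ge0 : 0 <= mu_t D0 t.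
  by rewrite addr_ge0 ?coherence_ge0 ?mulr_ge0.
have : mu_t D0 t <= k%:R * mu_t D0 t by rewrite ler_peMl // ler1n.
have := coherence_ge0 D0; rewrite /mu_t in hkt mu_ge0 *; lra.
Qed.

Lemma Dpath_exact_recovery (R : realType) (m p k : nat) (D0 W : 'M[R]_(m, p))
  (v : 'cV[R]_p) (J : {set 'I_p}) (al0 : 'cV[R]_p) (t t' alo ahi lambda : R) :
  unit_columns D0 -> W_set D0 W -> unit_sphere v -> #|J| = k ->
  k%:R * mu_t D0 t < 2^-1 -> 0 <= t' <= t -> 0 <= ahi ->
  (forall j, j \notin J -> al0 j 0 = 0) ->
  (forall j, j \in J -> alo <= `|al0 j 0| <= ahi) ->
  Num.sqrt k%:R * ahi / (2 - Q_t k D0 t ^+ 2) * t < lambda ->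
  lambda <= 4 / 9 * alo ->
  let D := Dpath D0 W v t' in
  let x := D0 *m al0 in
  let ah := alpha_hat D x J al0 lambda in
  [/\ forall b, lasso x D lambda ah <= lasso x D lambda b,
      forall b, lasso x D lambda b <= lasso x D lambda ah -> b = ah
    & sgn_vec ah = sgn_vec al0].
Proof.
move=> D0u Win vu Jk hkt /andP[t'0 t't] ahi0 supp al0_bd hlam1 hlam2 D x ah.
have t0 : 0 <= t := le_trans t'0 t't.
set mu := mu_t D0 t.
have mu_ge0 : 0 <= mu by rewrite addr_ge0 ?coherence_ge0 ?mulr_ge0.
have [Q0 Q2 _] := inv_one_sub_bounds (mulr_ge0 (ler0n _ k) mu_ge0) hkt.
have D_coh i j : i \in J -> i != j -> `|(D^T *m D) i j| <= mu.
  move=> iJ neq_ij; have t1 : t <= 1.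
    by apply: mu_t_small_le1 t0 hkt; rewrite -Jk; apply/card_gt0P; exists i.
  apply: le_trans (Dpath_gram_offdiag D0u Win vu _ neq_ij) _.
    by rewrite t'0 (le_trans t't t1).
  by rewrite lerD2l ler_wpM2l.
set eps := Num.sqrt k%:R * ahi * t.
have eps_ge0 : 0 <= eps by rewrite !mulr_ge0 ?sqrtr_ge0.
have eps_lt : eps < lambda * (2 - (1 - k%:R * mu)^-1).
  move: hlam1; rewrite Q_t_sqr; last by apply: lt_trans hkt _; rewrite invf_lt1 ?ltr1n.
  by rewrite mulrAC ltr_pdivrMr ?subr_gt0.
have noise_le : dot (x - D *m selJ R J *m ((selJ R J)^T *m al0))
                    (x - D *m selJ R J *m ((selJ R J)^T *m al0)) <= eps ^+ 2.
  apply: le_trans (Dpath_residual_le D0u Win vu t' supp (ahi := ahi) _) _.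
    by move=> j /al0_bd /andP[_ ->].
  rewrite /eps !exprMn sqr_sqrtr // Jk ler_wpM2l ?mulr_ge0 ?sqr_ge0 //.
  by rewrite ler_sqr ?nnegrE.
have al0_ge j : j \in J -> alo <= `|al0 j 0| by move=> /al0_bd /andP[-> _].
rewrite -Jk in hkt eps_lt.
exact: (exact_recovery (Dpath_gram_diag v D0u Win t') D_coh mu_ge0 hkt supp eps_ge0
  noise_le eps_lt al0_ge hlam2).
Qed.

Lemma ae_not_null d (T : measurableType d) (R : realType) (mu : {measure set T -> \bar R})
    (A : set T) :
  measurable A -> mu A = 0%E -> {ae mu, forall w, ~ A w}.
Proof. by move=> mA A0; apply/negligibleP; rewrite ?setCK. Qed.

Section AlmostSureBounds.
Context d (Omega : measurableType d) (R : realType) (P : probability Omega R) (p : nat).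
Variables (J : Omega -> {set 'I_p}) (a : 'I_p -> Omega -> R).
Hypothesis J_meas : forall S, measurable (J @^-1` [set S]).
Hypothesis a_meas : forall j, measurable_fun setT (a j).

Lemma measurable_coef_lt j (c : R) : measurable [set w | `|a j w| < c].
Proof.
have -> : [set w | `|a j w| < c] = a j @^-1` `](- c), c[%classic.
  by apply/seteqP; split => w /=; rewrite in_itv /= ltr_norml.
by rewrite -[X in measurable X]setTI; apply: a_meas => //; exact: measurable_itv.
Qed.

Lemma measurable_signal_gt j (c : R) :
  measurable [set w | j \in J w /\ c < `|signal J a w j 0|].
Proof.
have -> : [set w | j \in J w /\ c < `|signal J a w j 0|] =
    J @^-1` [set S : {set 'I_p} | j \in S] `&` a j @^-1` (~` `[- c, c]%classic).
  apply/seteqP; split => w /= [jJ]; rewrite /signal mxE jJ in_itv /= -ler_norml.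
    by move=> h; split => //; apply/negP; rewrite -ltNge.
  by rewrite ltNge => /negP.
apply: measurableI.
  have -> : J @^-1` [set S : {set 'I_p} | j \in S] =
      \bigcup_(S in [set S : {set 'I_p} | j \in S]) J @^-1` [set S].
    apply/seteqP; split => [w hw|w [S hS hw]]; first by exists (J w).
    by rewrite /preimage /= hw.
  by apply: fin_bigcup_measurable; [exact: finite_finset | move=> S _; exact: J_meas].
rewrite -[X in measurable X]setTI; apply: a_meas => //.
by apply: measurableC; exact: measurable_itv.
Qed.

Lemma ae_signal_bounds (alo ahi : R) :
  (forall j, P [set w | `|a j w| < alo] = 0%E) ->
  (forall j, P [set w | j \in J w /\ ahi < `|signal J a w j 0|] = 0%E) ->
  {ae P, forall w j, j \in J w -> alo <= `|signal J a w j 0| <= ahi}.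
Proof.
move=> hlow hhigh; apply: filter_forall => j.
apply: filterS2 (ae_not_null (measurable_coef_lt j alo) (hlow j))
  (ae_not_null (measurable_signal_gt j ahi) (hhigh j)) => w lo hi jJ.
rewrite /signal mxE jJ; apply/andP; split; first by rewrite leNgt; exact/negP.
by rewrite leNgt; apply/negP => gt; apply: hi; split => //; rewrite /signal mxE jJ.
Qed.

End AlmostSureBounds.

Unset Implicit Arguments. Set Strict Implicit.

Theorem proposition4 (R : realType) (m p k : nat) (D0 : 'M[R]_(m, p))
  (hD0 : unit_columns D0) (t : R)
  (hkt : k%:R * mu_t D0 t < 2^-1)
  (d : measure_display) (Omega : measurableType d) (P : probability Omega R)
  (J : Omega -> {set 'I_p}) (a : 'I_p -> Omega -> R)
  (hJk : forall w, #|J w| = k)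
  (hJmeas : forall S : {set 'I_p}, measurable (J @^-1` [set S]))
  (hJunif : forall S : {set 'I_p}, #|S| = k ->
     fine (P (J @^-1` [set S])) = ('C(p, k)%:R)^-1)
  (ha_meas : forall j, measurable_fun setT (a j))
  (ha_id : forall j j' (B : set R), measurable B ->
     P (a j @^-1` B) = P (a j' @^-1` B))
  (hindep : mutually_independent P
     (fun o : option 'I_p => match o with
        | None => [set E | exists A : set {set 'I_p}, E = J @^-1` A]
        | Some j => [set E | exists B : set R, measurable B /\ E = a j @^-1` B]
        end))
  (c : R)
  (hsubg : forall j (s : R),
     (\int[P]_w (expR (s * a j w))%:E <= (expR (c ^+ 2 * s ^+ 2 / 2))%:E)%E)
  (alo ahi : R) (halo : 0 < alo) (hlohi : alo <= ahi)
  (hlow : forall j, P [set w | `|a j w| < alo] = 0%E)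
  (hhigh : forall j, P [set w | j \in J w /\ ahi < `|signal J a w j 0|] = 0%E)
  (lambda t' : R)
  (hlam1 : Num.sqrt k%:R * ahi / (2 - Q_t k D0 t ^+ 2) * t < lambda)
  (hlam2 : lambda <= 4 / 9 * alo)
  (ht' : 0 <= t' <= t) :
  {ae P, forall w, forall (W : 'M[R]_(m, p)) (v : 'cV[R]_p),
     W_set D0 W -> unit_sphere v ->
     let D := Dpath D0 W v t' in
     let x := D0 *m signal J a w in
     let ah := alpha_hat D x (J w) (signal J a w) lambda in
     [/\ forall b : 'cV[R]_p, lasso x D lambda ah <= lasso x D lambda b,
         forall b : 'cV[R]_p, lasso x D lambda b <= lasso x D lambda ah -> b = ah
       & sgn_vec ah = sgn_vec (signal J a w)]}.
Proof.
have ahi_ge0 : 0 <= ahi by apply: le_trans hlohi; exact: ltW.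
apply: filterS (ae_signal_bounds hJmeas ha_meas hlow hhigh) => w al0_bd W v hW hv.
have supp j : j \notin J w -> signal J a w j 0 = 0 by move=> jJ; rewrite mxE (negbTE jJ).
exact: Dpath_exact_recovery hD0 hW hv (hJk w) hkt ht' ahi_ge0 supp al0_bd hlam1 hlam2.
Qed.
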